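(* Let $\mathcal{F}=\mathcal{B}(K_3)$. For every odd integer $n\ge 3$ with $n\ne 5$, $f(n,\mathcal{F})=2^{n-2}$.
   Context: For a graph $G$, a hypergraph $H$ is a Berge-$G$ hypergraph if there are an injective map $\phi:V(G)\to V(H)$ and pairwise distinct hyperedges $e_{xy}\in E(H)$, one for each $xy\in E(G)$, with $\phi(x),\phi(y)\in e_{xy}$. $\mathcal{B}(G)$ denotes the family of all Berge-$G$ hypergraphs. For a positive integer $n$ and a graph $G$, $f(n,\mathcal{B}(G))$ is the smallest number of colors in a coloring of all subsets of $[n]=\{1,\dots,n\}$ (i.e. of $2^{[n]}$) such that there is no monochromatic Berge-$G$ hypergraph, i.e. no color class, viewed as a (non-uniform) hypergraph on $[n]$, contains a Berge-$G$ subhypergraph. *)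

From mathcomp Require Import all_boot.
Set Implicit Arguments. Unset Strict Implicit. Unset Printing Implicit Defensive.

(* A (non-uniform) hypergraph on vertex type T is a predicate on {set T}
   (its set of hyperedges). *)

(* Graph G: vertex finType V, edge relation adj (intended symmetric and
   irreflexive); edges are the unordered pairs {x,y} with adj x y. *)
Definition graph_edge (V : finType) (adj : rel V) (p : {set V}) : bool :=
  [exists x, exists y, adj x y && (p == [set x; y])].

Definition contains_berge (V T : finType) (adj : rel V) (H : pred {set T}) : Prop :=
  exists (phi : V -> T) (e : {set V} -> {set T}),
    injective phi /\
    (forall p q, graph_edge adj p -> graph_edge adj q -> e p = e q -> p = q) /\
    (forall x y, adj x y ->
       H (e [set x; y]) /\ phi x \in e [set x; y] /\ phi y \in e [set x; y]).

Definition K3_adj : rel 'I_3 := fun x y => x != y.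

Definition good_coloring (V : finType) (adj : rel V) (n k : nat) : Prop :=
  exists col : {set 'I_n} -> 'I_k,
    forall i : 'I_k, ~ contains_berge adj (fun e => col e == i).

Definition f_is (V : finType) (adj : rel V) (n m : nat) : Prop :=
  good_coloring adj n m /\ (forall k, good_coloring adj n k -> m <= k).

From mathcomp Require Import all_boot zify.
Set Implicit Arguments. Unset Strict Implicit. Unset Printing Implicit Defensive.

(* Upper bound: colour S by its normal form (S or ~: S, whichever avoids the
   vertex 0) restricted to {2, ..., n-1}.  A colour class consists of two
   complementary pairs, so among three distinct sets of one colour two are
   complementary, hence disjoint, and no Berge triangle is monochromatic.
   Lower bound, n = 2h+1 with h >= 3: the pairwise intersections of any three
   distinct sets of size > h satisfy Hall's condition, so their distinct
   representatives span a Berge triangle.  Each colour thus contains at most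
   two of the 2^(n-1) sets of size > h.  For n = 3 one colour is not enough. *)

Lemma card_set (T : finType) : #|{set T}| = 2 ^ #|T|.
Proof. by rewrite -cardsT -card_powerset powersetT cardsT. Qed.

Lemma card_large_sets (T : finType) h : #|T| = h.*2.+1 ->
  #|[set S : {set T} | h < #|S|]| = 2 ^ h.*2.
Proof.
move=> card_T; set L := [set S | _].
have compl : ~: L = (@setC T) @^-1: L.
  apply/setP => S; rewrite !inE -leqNgt; have := cardsC S; rewrite card_T => ?.
  by apply/idP/idP; lia.
have := cardsC L; rewrite compl card_preimset; last exact: setC_inj.
by rewrite card_set card_T expnS; lia.
Qed.

Lemma card_le_fibers (T I : finType) (P : pred T) (f : T -> I) c :
  (forall i, #|[set x | P x & f x == i]| <= c) -> #|[set x | P x]| <= #|I| * c.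
Proof.
move=> fib; rewrite -sum_nat_const.
have -> : #|[set x | P x]| = \sum_i #|[set x | P x & f x == i]|.
  rewrite cardsE -sum1_card (partition_big f predT) //=.
  by apply: eq_bigr => i _; rewrite cardsE -sum1_card.
exact: leq_sum.
Qed.

Section DistinctRepresentatives.
Variable T : finType.
Implicit Types X Y Z : {set T}.

Lemma distinct_reps2 X Y : 0 < #|X| -> 0 < #|Y| -> 1 < #|X :|: Y| ->
  exists x y, [/\ x \in X, y \in Y & x != y].
Proof.
move=> /card_gt0P[x xX] /card_gt0P[y yY] /card_gt1P[a [b [aXY bXY ab]]].
have [exy|] := eqVneq x y; last by exists x, y.
subst y.
wlog ax : a b aXY bXY ab / a != x.
  move=> IH; have [ax|ax] := eqVneq a x; last exact: (IH a b).
  by apply: (IH b a); rewrite // -?ax eq_sym.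
by case/setUP: aXY => [aX|aY]; [exists a, x | exists x, a; rewrite eq_sym].
Qed.

Lemma removable_point_exists X Y Z : 0 < #|X| -> 0 < #|Y| -> 0 < #|Z| ->
  1 < #|X :|: Z| -> 1 < #|Y :|: Z| -> 2 < #|X :|: Y| ->
  exists2 z, z \in Z & (0 < #|X :\ z|) && (0 < #|Y :\ z|).
Proof.
wlog le_XY : X Y / #|X| <= #|Y|.
  move=> IH X0 Y0 Z0 XZ YZ XY; case: (leqP #|X| #|Y|) => [|/ltnW] le.
    exact: IH.
  rewrite setUC in XY.
  by have [z zZ] := IH Y X le Y0 X0 Z0 YZ XZ XY; exists z; rewrite // andbC.
move=> X0 Y0 /card_gt0P[z0 z0Z] XZ YZ XY.
have Y2 : 1 < #|Y| by have := cardsU X Y; lia.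
have cardsD1_gt0 (S : {set T}) z : 1 < #|S| -> 0 < #|S :\ z|.
  by have := cardsD1 z S; lia.
have [X1|X2] := leqP #|X| 1; last by exists z0; rewrite ?cardsD1_gt0.
have /subsetPn[z zZ zX] : ~~ (Z \subset X).
  by apply: contraTN XZ => /setUidPl->; rewrite -leqNgt.
exists z; rewrite // (cardsD1_gt0 Y) // andbT.
by have := cardsD1 z X; rewrite (negbTE zX); lia.
Qed.

Lemma distinct_reps3 X Y Z : 0 < #|X| -> 0 < #|Y| -> 0 < #|Z| ->
  1 < #|X :|: Y| -> 1 < #|X :|: Z| -> 1 < #|Y :|: Z| -> 2 < #|X :|: Y :|: Z| ->
  exists x y z, [/\ x \in X, y \in Y, z \in Z & [/\ x != y, y != z & x != z]].
Proof.
move=> X0 Y0 Z0 XY XZ YZ XYZ.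
have [sZ|/subsetPn[z zZ zXY]] := boolP (Z \subset X :|: Y); last first.
  have [x [y [xX yY xy]]] := distinct_reps2 X0 Y0 XY.
  exists x, y, z; split=> //; split=> //; apply: contraNneq zXY => <-.
    by rewrite inE yY orbT.
  by rewrite inE xX.
rewrite (setUidPl sZ) in XYZ.
have [z zZ /andP[Xz Yz]] := removable_point_exists X0 Y0 Z0 XZ YZ XYZ.
have XYz : 1 < #|X :\ z :|: Y :\ z|.
  by rewrite -setDUl; have := cardsD1 z (X :|: Y); lia.
have [x [y [/setD1P[xz xX] /setD1P[yz yY] xy]]] := distinct_reps2 Xz Yz XYz.
by exists x, y, z; split=> //; split=> //; rewrite eq_sym.
Qed.

End DistinctRepresentatives.

Section LargeSets.
Variables (T : finType) (h : nat).
Hypothesis card_T : #|T| <= h.*2.+1.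
Implicit Types A B C : {set T}.

Lemma leq_cardsI A B : #|A| + #|B| <= #|T| + #|A :&: B|.
Proof. by rewrite -cardsUI leq_add2r max_card. Qed.

Lemma cardsU_gt A B : A != B -> h < #|A| -> h < #|B| -> h.+1 < #|A :|: B|.
Proof.
move=> AB hA hB; rewrite ltnNge; apply: contra AB => hAB.
have eqU (S : {set T}) : S \subset A :|: B -> h < #|S| -> S = A :|: B.
  by move=> sS hS; apply/eqP; rewrite eqEcard sS (leq_trans hAB).
by apply/eqP; rewrite (eqU A) ?subsetUl // [RHS]eqU ?subsetUr.
Qed.

Lemma large_sets_distinct_reps A B C : 3 <= h ->
  h < #|A| -> h < #|B| -> h < #|C| -> A != B -> B != C -> A != C ->
  exists x y z, [/\ x \in B :&: C, y \in A :&: C, z \in A :&: B &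
                   [/\ x != y, y != z & x != z]].
Proof.
move=> h3 hA hB hC AB BC AC.
have meet0 (P Q : {set T}) : h < #|P| -> h < #|Q| -> 0 < #|P :&: Q|.
  by have := leq_cardsI P Q; lia.
have meet1 (P Q R : {set T}) : P != Q -> h < #|P| -> h < #|Q| -> h < #|R| ->
    1 < #|(P :&: R) :|: (Q :&: R)|.
  by rewrite -setIUl => PQ hP hQ hR; have := cardsU_gt PQ hP hQ;
     have := leq_cardsI (P :|: Q) R; lia.
apply: distinct_reps3; rewrite ?meet0 //.
- by rewrite meet1 // eq_sym.
- by rewrite (setIC B C) meet1 // eq_sym.
- by rewrite (setIC A C) (setIC A B) meet1 // eq_sym.
(* W contains A :&: B and (A :|: B) :&: C, whose sizes sum to at least h + 2;
   this forces |W| >= 3 only when h >= 3, which is where n = 5 fails. *)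
set W := _ :|: _ :|: _.
have sAB : A :&: B \subset W by rewrite subsetUr.
have sABC : (A :|: B) :&: C \subset W by rewrite setIUl setUC subsetUl.
have := subset_leq_card sAB; have := subset_leq_card sABC.
by have := cardsUI A B; have := leq_cardsI (A :|: B) C; lia.
Qed.
End LargeSets.

Lemma contains_berge_sub (V T : finType) (adj : rel V) (H H' : pred {set T}) :
  (forall S, H S -> H' S) -> contains_berge adj H -> contains_berge adj H'.
Proof.
move=> sHH' [phi [e [inj_phi [inj_e He]]]].
by exists phi, e; do 2!split=> //; move=> x y /He[/sHH'].
Qed.

Section BergeTriangle.
Variables (T : finType) (H : pred {set T}).

Let v0 : 'I_3 := ord0.
Let v1 : 'I_3 := Ordinal (isT : 1 < 3).
Let v2 : 'I_3 := ord_max.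

Lemma K3_vertex_cases (i : 'I_3) : [\/ i = v0, i = v1 | i = v2].
Proof.
by case: i => [[|[|[|//]]] ?]; [constructor 1 | constructor 2 | constructor 3];
  apply: val_inj.
Qed.

Lemma K3_edge_cases p : graph_edge K3_adj p ->
  [\/ p = [set v1; v2], p = [set v0; v2] | p = [set v0; v1]].
Proof.
case/existsP=> a /existsP[b /andP[ab /eqP->]].
by case: (K3_vertex_cases a) ab => ->; case: (K3_vertex_cases b) => -> // _;
  rewrite 1?setUC; [constructor 3 | constructor 2 | constructor 3 |
                    constructor 1 | constructor 2 | constructor 1].
Qed.

Lemma berge_K3_of_reps A B C x y z :
  H A -> H B -> H C -> A != B -> B != C -> A != C ->
  x \in B :&: C -> y \in A :&: C -> z \in A :&: B -> x != y -> y != z -> x != z ->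
  contains_berge K3_adj H.
Proof.
move=> HA HB HC AB BC AC /setIP[xB xC] /setIP[yA yC] /setIP[zA zB] xy yz xz.
exists (fun i => if i == v0 then x else if i == v1 then y else z).
exists (fun p : {set 'I_3} => if v0 \notin p then A else if v1 \notin p then B else C).
split; [|split].
- move=> i j; case: (K3_vertex_cases i) => ->; case: (K3_vertex_cases j) => -> //= e;
  by move: xy yz xz; rewrite e eqxx.
- move=> p q /K3_edge_cases[]-> /K3_edge_cases[]-> //; rewrite !inE /= => e;
  by move: AB BC AC; rewrite e eqxx.
- move=> a b; case: (K3_vertex_cases a) => ->; case: (K3_vertex_cases b) => -> //= _;
  by rewrite !inE /=.
Qed.

Lemma berge_K3_meeting_triple : contains_berge K3_adj H ->
  exists A B C, [/\ H A, H B & H C] /\ [/\ A != B, B != C & A != C] /\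
    [/\ B :&: C != set0, A :&: C != set0 & A :&: B != set0].
Proof.
move=> [phi [e [_ [inj_e He]]]].
have edge a b : a != b -> graph_edge K3_adj [set a; b].
  by move=> ab; apply/existsP; exists a; apply/existsP; exists b; rewrite eqxx andbT.
have [HA [Aa Ab]] := He v1 v2 isT.
have [HB [Ba Bb]] := He v0 v2 isT.
have [HC [Ca Cb]] := He v0 v1 isT.
have meet (S S' : {set T}) w : w \in S -> w \in S' -> S :&: S' != set0.
  by move=> wS wS'; apply/set0Pn; exists w; rewrite inE wS.
exists (e [set v1; v2]), (e [set v0; v2]), (e [set v0; v1]).
split; first by [].
split; last by split; [apply: meet Ba Ca | apply: meet Aa Cb | apply: meet Ab Bb].
have e_neq a b c d : a != b -> c != d -> [set a; b] != [set c; d] ->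
    e [set a; b] != e [set c; d].
  by move=> ab cd; apply: contraNneq => /inj_e -> //; apply: edge.
split; apply: e_neq => //; apply/eqP => /setP;
  [move/(_ v0) | move/(_ v1) | move/(_ v0)]; by rewrite !inE.
Qed.
End BergeTriangle.

Lemma berge_K3_full (T : finType) : 2 < #|T| ->
  contains_berge K3_adj (fun _ : {set T} => true).
Proof.
case/card_gt2P=> x [y [z [_ [xy yz zx]]]].
have ne (a b c : T) : a != b -> a != c -> [set b; c] != [set a; c].
  by move=> ab ac; apply/eqP => /setP/(_ a); rewrite !inE eqxx (negbTE ab) (negbTE ac).
have xz : x != z by rewrite eq_sym.
apply: (@berge_K3_of_reps _ _ [set y; z] [set x; z] [set x; y] x y z) => //;
  try by rewrite !inE !eqxx ?orbT.
- exact: ne.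
- by rewrite (setUC [set x]) (setUC [set x] [set y]) ne // eq_sym.
- by rewrite (setUC [set y]) ne.
Qed.

Lemma good_coloring_of_classes (V : finType) (adj : rel V) n (C : finType)
    (col : {set 'I_n} -> C) :
  (forall c, ~ contains_berge adj (fun S => col S == c)) -> good_coloring adj n #|C|.
Proof.
move=> free; exists (fun S => enum_rank (col S)) => i.
apply: contra_not (free (enum_val i)); apply: contains_berge_sub => S /eqP <-.
by rewrite enum_rankK.
Qed.

Section NormalFormColoring.
Variable m : nat.
Implicit Types S : {set 'I_m.+2}.

Let v1 : 'I_m.+2 := Ordinal (isT : 1 < m.+2).

Definition normal_form S := if ord0 \in S then ~: S else S.

Definition normal_key S : {set 'I_m} := [set j | rshift 2 j \in normal_form S].

Lemma ord0_notin_normal_form S : ord0 \notin normal_form S.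
Proof. by rewrite /normal_form; case: ifP => S0; rewrite ?inE S0. Qed.

Lemma normal_form_inj_meet S S' :
  normal_form S = normal_form S' -> S :&: S' != set0 -> S = S'.
Proof.
rewrite /normal_form; case: ifP => _; case: ifP => _ //; first by move/setC_inj.
- by move=> <-; rewrite setICr eqxx.
- by move=> ->; rewrite setIC setICr eqxx.
Qed.

Lemma eq_normal_form S S' : normal_key S = normal_key S' ->
  (v1 \in normal_form S) = (v1 \in normal_form S') -> normal_form S = normal_form S'.
Proof.
move=> /setP eq_key eq_v1; apply/setP => u.
have [->|->|[j ->]] : [\/ u = ord0, u = v1 | exists j, u = rshift 2 j].
- case: u => [[|[|k]] lt_k]; [constructor 1 | constructor 2 | constructor 3].
  1,2: exact: val_inj.
  by exists (Ordinal (lt_k : k < m)); apply: val_inj.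
- by rewrite !(negbTE (ord0_notin_normal_form _)).
- exact: eq_v1.
- by have := eq_key j; rewrite !inE.
Qed.

Lemma normal_key_class_K3_free c :
  ~ contains_berge K3_adj (fun S => normal_key S == c).
Proof.
case/berge_K3_meeting_triple=> A [B [C [[/eqP kA /eqP kB /eqP kC]]]].
case=> [[AB BC AC] [BC0 AC0 AB0]].
have eq_of (S S' : {set 'I_m.+2}) : normal_key S = c -> normal_key S' = c ->
    (v1 \in normal_form S) = (v1 \in normal_form S') -> S :&: S' != set0 -> S = S'.
  by move=> kS kS' eq_v1; apply/normal_form_inj_meet/eq_normal_form; rewrite ?kS.
set bit := fun S => v1 \in normal_form S.
have : [|| bit A == bit B, bit B == bit C | bit A == bit C].
  by case: (bit A); case: (bit B); case: (bit C).
case/or3P => /eqP eq_bit.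
- by move: AB; rewrite (eq_of A B) ?eqxx.
- by move: BC; rewrite (eq_of B C) ?eqxx.
- by move: AC; rewrite (eq_of A C) ?eqxx.
Qed.

Lemma good_coloring_K3_upper : good_coloring K3_adj m.+2 (2 ^ m).
Proof.
by have := good_coloring_of_classes normal_key_class_K3_free; rewrite card_set card_ord.
Qed.

End NormalFormColoring.

Lemma K3_free_large_card (T : finType) h (H : pred {set T}) :
  #|T| <= h.*2.+1 -> 3 <= h -> ~ contains_berge K3_adj H ->
  #|[set S : {set T} | h < #|S| & H S]| <= 2.
Proof.
move=> card_T h3 free; rewrite leqNgt; apply/negP.
case/card_gt2P=> A [B [C [[]]]]; rewrite !inE => /andP[hA HA] /andP[hB HB] /andP[hC HC].
rewrite [C == A]eq_sym => -[AB BC AC].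
have [x [y [z [xBC yAC zAB [xy yz xz]]]]] :=
  large_sets_distinct_reps card_T h3 hA hB hC AB BC AC.
exact: free (berge_K3_of_reps HA HB HC AB BC AC xBC yAC zAB xy yz xz).
Qed.

Lemma good_coloring_K3_lower h k : 3 <= h ->
  good_coloring K3_adj h.*2.+1 k -> 2 ^ h.*2 <= k * 2.
Proof.
move=> h3 [col free].
rewrite -(card_large_sets (T := 'I_h.*2.+1)) ?card_ord // -[k]card_ord.
apply: card_le_fibers => i.
by apply: K3_free_large_card (free i) => //; rewrite card_ord.
Qed.

Lemma good_coloring_K3_gt1 n k : 2 < n -> good_coloring K3_adj n k -> 1 < k.
Proof.
move=> n_gt2 [col free]; case: k col free => [|[|//]] col free.
  by case: (col set0).
case: (free (col set0)); apply: contains_berge_sub (berge_K3_full _) => [S _|].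
  by rewrite !ord1.
by rewrite card_ord.
Qed.

Theorem theorem1 (n : nat) :
  odd n -> 3 <= n -> n != 5 -> f_is K3_adj n (2 ^ (n - 2)).
Proof.
move=> odd_n n_ge3 n_neq5; split.
  case: n odd_n n_ge3 n_neq5 => [|[|m]] // _ _ _.
  by rewrite !subSS subn0; exact: good_coloring_K3_upper.
move=> k col.
have n_eq : n = (n./2).*2.+1 by rewrite -[LHS]odd_double_half odd_n.
have [h3|h_lt3] := leqP 3 n./2.
  rewrite n_eq in col; have := good_coloring_K3_lower h3 col.
  have -> : (n./2).*2 = (n - 2).+1 by lia.
  by rewrite expnS mulnC leq_pmul2r.
have -> : n - 2 = 1 by lia.
exact: good_coloring_K3_gt1 col.
Qed.
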